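(* Consider the following Naive Uniform Elimination algorithm on a stream of $K$ arms, with input parameters $\varepsilon\in(0,1)$ and $\delta\in(0,1)$: maintain a single stored arm and a best empirical reward $\widehat{\mu}^*$ initialized to $0$; for each arriving $\mathsf{arm}_i$, pull it $\frac{16}{\varepsilon^2}\log(\frac{K}{\delta})$ times and record its empirical mean reward $\widehat{\mu}_i$; if $\widehat{\mu}_i>\widehat{\mu}^*$, discard the stored arm, store $\mathsf{arm}_i$ and set $\widehat{\mu}^*=\widehat{\mu}_i$; otherwise discard $\mathsf{arm}_i$ and keep the stored arm; at the end of the stream return the stored arm $\overline{\mathsf{arm}}$. Then for every integer $c\geq 1$, the returned arm has mean reward \[\mu_{\overline{\mathsf{arm}}}\geq \mu^*-c\cdot\varepsilon\] with probability at least $1-\left(\tfrac{1}{2}\right)^{c^2}\cdot\delta$.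
   Context: There are $K$ arms arriving one by one in a stream; each arm has an unknown reward distribution supported on $[0,1]$ with mean $\mu_i$, pulls give independent samples, and $\mu^*=\max_i\mu_i$. *)

From HB Require Import structures.
From mathcomp Require Import all_boot all_order all_algebra.
From mathcomp Require Import all_classical all_reals all_analysis.
Set Implicit Arguments. Unset Strict Implicit. Unset Printing Implicit Defensive.
Import Order.TTheory GRing.Theory Num.Theory.
Local Open Scope classical_set_scope.
Local Open Scope ring_scope.

Definition mutually_independent d (T : measurableType d) (R : realType)
  (P : probability T R) (I : eqType) (X : I -> T -> R) : Prop :=
  forall (S : seq I) (B : I -> set R), uniq S -> (forall i, measurable (B i)) ->
    P (\bigcap_(i in [set` S]) (X i @^-1` B i)) =
    (\prod_(i <- S) P (X i @^-1` B i))%E.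

Definition nue_pulls (R : realType) (K : nat) (eps delta : R) : nat :=
  `|Num.ceil (16 / eps ^+ 2 * ln (K%:R / delta))|%N.

Definition emp_mean (R : realType) (T : Type) (K N : nat)
  (X : 'I_K * nat -> T -> R) (i : 'I_K) (t : T) : R :=
  (\sum_(j < N) X (i, val j) t) / N%:R.

(* Naive Uniform Elimination: process arms in stream order, storing an arm and the
   best empirical mean (initially 0); a new arm replaces the stored one iff its
   empirical mean is strictly larger.  [i0] is the arm returned if no arm was
   ever stored (only possible when every empirical mean is 0). *)
Definition nue_output (R : realType) (K : nat) (i0 : 'I_K) (mh : 'I_K -> R) : 'I_K :=
  (foldl (fun (s : 'I_K * R) (i : 'I_K) => if s.2 < mh i then (i, mh i) else s)
         (i0, 0) (enum 'I_K)).1.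

(* Mean reward of arm i (all pulls of arm i are identically distributed). *)
Definition arm_mean d (T : measurableType d) (R : realType) (P : probability T R)
  (K : nat) (X : 'I_K * nat -> {RV P >-> R}) (i : 'I_K) : R :=
  fine ('E_P[X (i, 0%N)]).

Definition best_mean (R : realType) (K : nat) (i0 : 'I_K) (mu : 'I_K -> R) : R :=
  \big[Num.max/mu i0]_(i < K) mu i.

From HB Require Import structures.
From mathcomp Require Import all_boot all_order all_algebra.
From mathcomp Require Import all_classical all_reals all_analysis.
From mathcomp Require Import lra ring measurable_realfun.
Set Implicit Arguments. Unset Strict Implicit. Unset Printing Implicit Defensive.
Import Order.TTheory GRing.Theory Num.Theory.
Local Open Scope classical_set_scope.
Local Open Scope ring_scope.

(* Let [b] be an arm of largest mean.  If every arm's empirical mean is below its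
   mean plus [c eps / 2] and the empirical mean of [b] is above [mu b - c eps / 2],
   then the returned arm, whose empirical mean is largest, has mean above
   [mu b - c eps].  Each of these [K] events fails with probability at most
   [exp (- N (c eps / 2)^2 / 2)], which the choice [N >= 16/eps^2 ln (K/delta)] makes
   at most [2^(-c^2) delta / K]; a union bound concludes (one arm is trivial).
   The tail bound is a Hoeffding inequality for independent identically distributed
   [0,1]-valued pulls.  It is proved by rounding the pulls up to the grid [k/M]:
   the rounded pulls have a finite law, their joint law on cylinders is a product
   by independence, and the Chernoff bound becomes a finite computation using
   [exp x <= 1 + x + 5/4 x^2] for [x <= 1]. *)

Section hoeffding_lemma.
Variable R : realType.

Lemma expR_le_quadratic (x : R) : x <= 1 -> expR x <= 1 + x + 5/4 * x ^+ 2.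
Proof.
move=> x1.
(* [expR (-y) >= 1 - y] rearranged *)
have expR_le_inv (y : R) : y < 1 -> (1 - y) * expR y <= 1.
  move=> y1; rewrite -[X in _ <= X](expRxMexpNx_1 y) mulrC ler_pM2l ?expR_gt0 //.
  exact: expR_ge1Dx.
have [x0|x0] := lerP x 0.
  have := expR_le_inv x (le_lt_trans x0 ltr01); have := expR_gt0 x; nra.
(* for [0 < x <= 1] apply the bound to [y = x/4] and take fourth powers *)
pose y := x / 4.
have y0 : 0 <= y by rewrite /y; lra.
have y1 : y <= 1/4 by rewrite /y; lra.
have := expR_le_inv y ltac:(rewrite /y; lra).
have -> : x = 4%:R * y by rewrite /y; field.
rewrite expRM_natl; have := expR_gt0 y; set e := expR y => e0 ey.
have ey4 : (1 - y) ^+ 4 * e ^+ 4 <= 1.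
  by rewrite -exprMn; apply: exprn_ile1 => //; nra.
have poly4 : 1 <= (1 - y) ^+ 4 * (1 + 4%:R * y + 5/4 * (4%:R * y) ^+ 2) by nra.
by have := le_trans ey4 poly4; rewrite ler_pM2l ?exprn_gt0 //; lra.
Qed.

Lemma mgf_le_expR (I : finType) (p z : I -> R) (lam : R) :
  (forall i, 0 <= p i) -> \sum_i p i = 1 -> (forall i, 0 <= z i <= 1) ->
  0 <= lam <= 1 ->
  \sum_i p i * expR (lam * z i) <= expR (lam * (\sum_i p i * z i) + 5/16 * lam ^+ 2).
Proof.
move=> p0 p1 z01 lam01; set m := \sum_i p i * z i.
have m01 : 0 <= m <= 1.
  apply/andP; split; first by apply: sumr_ge0 => i _; have := p0 i; have := z01 i; nra.
  by rewrite -p1; apply: ler_sum => i _; have := p0 i; have := z01 i; nra.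
set S2 := \sum_i p i * z i ^+ 2.
have S2m : S2 <= m by apply: ler_sum => i _; apply: ler_wpM2l => //; have := z01 i; nra.
have -> : \sum_i p i * expR (lam * z i) =
    expR (lam * m) * \sum_i p i * expR (lam * (z i - m)).
  rewrite mulr_sumr; apply: eq_bigr => i _.
  by rewrite mulrCA -expRD; congr (_ * expR _); ring.
rewrite expRD ler_pM2l ?expR_gt0 //.
apply: (@le_trans _ _ (\sum_i p i * (1 + lam * (z i - m) + 5/4 * (lam * (z i - m)) ^+ 2))).
  apply: ler_sum => i _; apply: ler_wpM2l => //; apply: expR_le_quadratic.
  by have := z01 i; nra.
have -> : \sum_i p i * (1 + lam * (z i - m) + 5/4 * (lam * (z i - m)) ^+ 2) =
    1 + 5/4 * lam ^+ 2 * (S2 - m ^+ 2).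
  rewrite (eq_bigr (fun i => (1 - lam * m + 5/4 * lam ^+ 2 * m ^+ 2) * p i +
     (lam - 5/2 * lam ^+ 2 * m) * (p i * z i) + 5/4 * lam ^+ 2 * (p i * z i ^+ 2))); last first.
    by move=> i _; field.
  by rewrite !big_split /= -!mulr_sumr p1 -/m -/S2; field.
apply: le_trans (expR_ge1Dx _).
(* the variance of a [0,1]-valued variable is at most 1/4 *)
have var_le : S2 - m ^+ 2 <= 1/4 by have := sqr_ge0 (m - 1/2); nra.
by rewrite lerD2l -mulrA; have := sqr_ge0 lam; nra.
Qed.

Lemma chernoff_ffun (I : finType) (n : nat) (p z : I -> R) (lam t : R) :
  (forall i, 0 <= p i) -> \sum_i p i = 1 -> (forall i, 0 <= z i <= 1) ->
  0 <= lam <= 1 ->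
  \sum_(f : {ffun 'I_n -> I} | t <= \sum_j z (f j)) \prod_j p (f j)
    <= expR (lam * (n%:R * (\sum_i p i * z i) - t) + n%:R * (5/16 * lam ^+ 2)).
Proof.
(* Markov's inequality for [expR (lam * (\sum_j z (f j) - t))]; the resulting sum of
   products over [f] factorizes *)
move=> p0 p1 z01 lam01.
pose G (f : {ffun 'I_n -> I}) := expR (- (lam * t)) * \prod_j (p (f j) * expR (lam * z (f j))).
apply: (@le_trans _ _ (\sum_f G f)).
  rewrite big_mkcond /=; apply: ler_sum => f _.
  have G0 : 0 <= G f.
    by apply: mulr_ge0; [|apply: prodr_ge0 => j _; apply: mulr_ge0]; rewrite ?expR_ge0.
  case: ifP => // tf.
  have -> : G f = \prod_j p (f j) * expR (lam * (\sum_j z (f j) - t)).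
    rewrite /G big_split /= mulrCA; congr (_ * _).
    by rewrite mulrBr expRD mulrC mulr_sumr expR_sum.
  rewrite -[leLHS]mulr1; apply: ler_wpM2l; first exact: prodr_ge0.
  by rewrite -expR0 ler_expR; apply: mulr_ge0; [case/andP: lam01|rewrite subr_ge0].
rewrite /G -mulr_sumr -(bigA_distr_bigA (fun _ i => p i * expR (lam * z i))) /=.
rewrite prodr_const card_ord.
have -> : lam * (n%:R * (\sum_i p i * z i) - t) + n%:R * (5/16 * lam ^+ 2) =
   - (lam * t) + n%:R * (lam * (\sum_i p i * z i) + 5/16 * lam ^+ 2) by ring.
rewrite expRD ler_pM2l ?expR_gt0 // expRM_natl.
apply: lerXn2r; rewrite ?nnegrE ?expR_ge0 //; last exact: mgf_le_expR.
by apply: sumr_ge0 => i _; apply: mulr_ge0; rewrite ?expR_ge0.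
Qed.

End hoeffding_lemma.

Lemma measurable_preimageT d d' (T : measurableType d) (U : measurableType d')
    (f : T -> U) (A : set U) :
  measurable_fun setT f -> measurable A -> measurable (f @^-1` A).
Proof. by move=> mf mA; rewrite -[_ @^-1` _]setTI; exact: mf. Qed.

Lemma measurable_set_ler d (T : measurableType d) (R : realType) (f g : T -> R) :
  measurable_fun setT f -> measurable_fun setT g -> measurable [set x | f x <= g x].
Proof.
move=> mf mg; have := measurable_fun_ler mf mg measurableT (Y := [set true]).
by rewrite setTI; apply.
Qed.

Lemma measurable_set_ltr d (T : measurableType d) (R : realType) (f g : T -> R) :
  measurable_fun setT f -> measurable_fun setT g -> measurable [set x | f x < g x].
Proof.
move=> mf mg; have := measurable_fun_ltr mf mg measurableT (Y := [set true]).
by rewrite setTI; apply.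
Qed.

Lemma measure_bigsetU_le d (T : measurableType d) (R : realType)
    (mu : {measure set T -> \bar R}) (I : Type) (r : seq I) (Q : pred I)
    (F : I -> set T) :
  (forall i, measurable (F i)) ->
  (mu (\big[setU/set0]_(i <- r | Q i) F i) <= \sum_(i <- r | Q i) mu (F i))%E.
Proof.
move=> mF; elim: r => [|a r IH]; first by rewrite !big_nil measure0.
rewrite !big_cons; case: (Q a) => //.
apply: le_trans (measureU2 mu (mF a) _) _; first exact: bigsetU_measurable.
by rewrite leeD2l.
Qed.

Section expectation01.
Context d (T : measurableType d) (R : realType) (P : probability T R).
Variable V : T -> R.
Hypotheses (mV : measurable_fun setT V) (V01 : forall t, 0 <= V t <= 1).

Lemma Lfun1_01 : V \in Lfun P 1.
Proof.
apply/Lfun1_integrable/measurable_bounded_integrable => //.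
  by apply: le_lt_trans (probability_le1 P measurableT) _; rewrite ltry.
exists 1; split => // M M1 t _ /=; have /andP[V0 V1] := V01 t.
by rewrite ger0_norm // (le_trans V1) // ltW.
Qed.

Lemma expectation01E : ('E_P[V] = (fine 'E_P[V])%:E)%E.
Proof. by rewrite fineK // expectation_fin_num // Lfun1_01. Qed.

Lemma fine_expectation01 : 0 <= fine 'E_P[V] <= 1.
Proof.
rewrite -!lee_fin -expectation01E; apply/andP; split.
  by apply: expectation_ge0 => t; case/andP: (V01 t).
rewrite -(expectation_cst P 1); apply: expectation_le => //.
- by move=> t; case/andP: (V01 t).
- by apply: aeW => t; case/andP: (V01 t).
Qed.

Lemma fine_expectation_onem : fine 'E_P[fun t => 1 - V t] = 1 - fine 'E_P[V].
Proof.
have -> : (fun t => 1 - V t) = cst 1 \- V by [].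
by rewrite expectationB ?Lfun_cst ?Lfun1_01 // expectation_cst expectation01E.
Qed.

End expectation01.

Lemma mutually_independent_comp d (T : measurableType d) (R : realType)
    (P : probability T R) (I : eqType) (J : finType) (X : I -> T -> R)
    (h : J -> I) (g : R -> R) :
  mutually_independent P X -> injective h -> measurable_fun setT g ->
  forall B : J -> set R, (forall j, measurable (B j)) ->
  P (\bigcap_j ((g \o X (h j)) @^-1` B j)) =
  (\prod_j P ((g \o X (h j)) @^-1` B j))%E.
Proof.
move=> Xind h_inj mg B mB.
pose B' i := if [pick j | h j == i] is Some j then g @^-1` B j else setT.
have B'h j : B' (h j) = g @^-1` B j.
  by rewrite /B'; case: pickP => [j' /eqP/h_inj -> // | /(_ j)]; rewrite eqxx.
have mB' i : measurable (B' i).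
  by rewrite /B'; case: pickP => // j _; exact: measurable_preimageT.
have -> : \bigcap_j ((g \o X (h j)) @^-1` B j) =
    \bigcap_(i in [set` [seq h j | j <- index_enum J]]) (X i @^-1` B' i).
  apply/seteqP; split => t /= Bt.
    by move=> _ /mapP[j _ ->]; rewrite B'h; exact: Bt.
  by move=> j _; have := Bt (h j) (map_f h (mem_index_enum j)); rewrite B'h.
rewrite Xind ?map_inj_uniq ?index_enum_uniq // big_map.
by apply: eq_bigr => j _; rewrite B'h.
Qed.

Definition bin_itv {R : realType} (M k : nat) : set R :=
  `](k%:R - 1) / M%:R, k%:R / M%:R]%classic.

Definition bin {R : realType} (M : nat) (y : R) : nat := `|Num.ceil (y * M%:R)|%N.

Section bins.
Variables (R : realType) (M : nat).
Hypothesis M_gt0 : (0 < M)%N.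

Lemma measurable_bin_itv k : measurable (bin_itv M k : set R).
Proof. exact: measurable_itv. Qed.

Lemma bin_le (y : R) : 0 <= y <= 1 -> (bin M y <= M)%N.
Proof.
move=> /andP[y0 y1]; rewrite -(ler_nat R) /bin natr_absz ger0_norm.
  have : Num.ceil (y * M%:R) <= M%:Z by rewrite ceil_le_int; have := ler0n R M; nra.
  by rewrite -(ler_int R).
by rewrite ceil_ge0; have := ler0n R M; nra.
Qed.

Lemma bin_itv_bin (y : R) : 0 <= y -> bin_itv M (bin M y) y.
Proof.
move=> y0; have M0 : (0 : R) < M%:R by rewrite ltr0n.
rewrite /bin_itv /bin /= in_itv /= natr_absz ger0_norm; last by rewrite ceil_ge0; nra.
have /andP[lt_ceil ceil_le] := ceil_itv (y * M%:R); rewrite intrD /= in lt_ceil.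
rewrite ltr_pdivrMr // ler_pdivlMr // ceil_le andbT.
by move: lt_ceil; rewrite (_ : (-1)%:~R = -1).
Qed.

Lemma bin_itv_uniq (y : R) k k' : bin_itv M k y -> bin_itv M k' y -> k = k'.
Proof.
have M0 : (0 : R) < M%:R by rewrite ltr0n.
rewrite /bin_itv /= !in_itv /= => /andP[a1 a2] /andP[b1 b2].
rewrite ltr_pdivrMr // in a1; rewrite ltr_pdivrMr // in b1.
rewrite ler_pdivlMr // in a2; rewrite ler_pdivlMr // in b2.
by apply/eqP; rewrite eqn_leq; apply/andP; split; rewrite -ltnS -(ltr_nat R) -natr1; lra.
Qed.

End bins.

Lemma measurable_bin_preimage d (T : measurableType d) (R : realType)
    (U : T -> R) M k :
  measurable_fun setT U -> measurable (U @^-1` bin_itv M k).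
Proof. by move=> mU; apply: measurable_preimageT => //; exact: measurable_bin_itv. Qed.

Section hoeffding.
Context d (T : measurableType d) (R : realType) (P : probability T R).
Variables (n : nat) (V : T -> R) (W : 'I_n -> T -> R).
Hypotheses (mV : measurable_fun setT V) (V01 : forall t, 0 <= V t <= 1).
Hypotheses (mW : forall j, measurable_fun setT (W j)) (W01 : forall j t, 0 <= W j t <= 1).
Hypothesis W_indep : forall B : 'I_n -> set R, (forall j, measurable (B j)) ->
  P (\bigcap_j (W j @^-1` B j)) = (\prod_j P (W j @^-1` B j))%E.
Hypothesis W_ident : forall j A, measurable A -> P (W j @^-1` A) = P (V @^-1` A).

Let mean := fine 'E_P[V].

Section discretization.
Variable M : nat.
Hypothesis M_gt0 : (0 < M)%N.

Let p (k : 'I_M.+1) : R := fine (P (V @^-1` bin_itv M k)).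
Let z (k : 'I_M.+1) : R := k%:R / M%:R.

Let M_gt0R : (0 : R) < M%:R. Proof. by rewrite ltr0n. Qed.

Let p_ge0 k : 0 <= p k. Proof. exact: fine_ge0. Qed.

Let z01 k : 0 <= z k <= 1.
Proof.
rewrite divr_ge0 //= ler_pdivrMr // mul1r ler_nat -ltnS; exact: ltn_ord.
Qed.

Let PV_bin (k : 'I_M.+1) : P (V @^-1` bin_itv M k) = (p k)%:E.
Proof.
by rewrite /p fineK //; apply: fin_num_measure; exact: measurable_bin_preimage.
Qed.

Let PW_bin j (k : 'I_M.+1) : P (W j @^-1` bin_itv M k) = (p k)%:E.
Proof. by rewrite W_ident ?PV_bin //; exact: measurable_bin_itv. Qed.

Lemma bin_prob_sum : \sum_k p k = 1.
Proof.
apply: EFin_inj; rewrite -sumEFin.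
rewrite (eq_bigr (fun k : 'I_M.+1 => P (V @^-1` bin_itv M k))); last first.
  by move=> k _; rewrite PV_bin.
rewrite -measure_bigsetU_ord //; last first.
- by move=> k k' _ _ [t [hk hk']]; apply: val_inj; exact: bin_itv_uniq hk hk'.
- by move=> k; exact: measurable_bin_preimage.
rewrite -(@probability_setT _ _ _ P); congr (P _); apply/seteqP; split => // t _.
rewrite -(bigcup_mkord _ (fun k => V @^-1` bin_itv M k)).
have /andP[V0 V1] := V01 t.
by exists (bin M (V t)); [rewrite /= ltnS bin_le ?V0 | exact: bin_itv_bin].
Qed.

Lemma bin_prob_mean_le : \sum_k p k * z k <= mean + 1 / M%:R.
Proof.
pose g t := \sum_k z k * \1_(V @^-1` bin_itv M k) t.
have term_ge0 k t : 0 <= z k * \1_(V @^-1` bin_itv M k) t.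
  by apply: mulr_ge0; [case/andP: (z01 k)|rewrite indicE].
(* exactly one indicator is nonzero: the one of the bin of [V t] *)
have g_le t : g t <= V t + 1 / M%:R.
  have /andP[V0 V1] := V01 t.
  have kt : (bin M (V t) < M.+1)%N by rewrite ltnS bin_le ?V0.
  rewrite /g (bigD1 (Ordinal kt)) //= big1 ?addr0.
    rewrite indicE mem_set ?mulr1; last exact: bin_itv_bin.
    have := bin_itv_bin M_gt0 V0; rewrite /bin_itv /= in_itv /= => /andP[+ _].
    by rewrite /z mulrBl; lra.
  move=> k /eqP k_ne; rewrite indicE memNset ?mulr0 // => Vk; apply: k_ne.
  by apply: val_inj; exact: bin_itv_uniq Vk (bin_itv_bin M_gt0 V0).
have mg : measurable_fun setT g.
  apply: measurable_sum => k; apply: measurable_funM => //.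
  by apply: measurable_indic; exact: measurable_bin_preimage.
have Eg : ('E_P[g] = (\sum_k p k * z k)%:E)%E.
  rewrite unlock /g; under eq_integral => t _ do rewrite -sumEFin.
  rewrite ge0_integral_sum //; first last.
  - by move=> k t _; rewrite lee_fin term_ge0.
  - move=> k; apply/measurable_EFinP/measurable_funM => //.
    by apply: measurable_indic; exact: measurable_bin_preimage.
  rewrite -sumEFin; apply: eq_bigr => k _.
  rewrite (@integralZl_indic _ _ _ P _ measurableT (fun=> V @^-1` bin_itv M k) (z k)) //.
  - rewrite integral_indic //; last exact: measurable_bin_preimage.
    by rewrite setIT muleC [RHS]EFinM; congr (_ * _)%E; exact: PV_bin.
  - by rewrite ltNge; case/andP: (z01 k) => ->.
  - exact: measurable_bin_preimage.
rewrite -lee_fin -Eg EFinD -(expectation01E P mV V01) -(expectation_cst P).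
rewrite -expectationD ?Lfun_cst ?Lfun1_01 //; apply: expectation_le => //.
- by apply: measurable_funD.
- by move=> t; apply: sumr_ge0 => k _; exact: term_ge0.
- by move=> t /=; rewrite addr_ge0 //; case/andP: (V01 t).
- exact: aeW.
Qed.

Lemma sum_tail_le_bins (t : R) :
  (P [set x | (t <= \sum_j W j x)%R] <=
   (\sum_(f : {ffun 'I_n -> 'I_M.+1} | t <= \sum_j z (f j)) \prod_j p (f j))%:E)%E.
Proof.
pose cyl (f : {ffun 'I_n -> 'I_M.+1}) := \bigcap_j (W j @^-1` bin_itv M (f j)).
have mcyl f : measurable (cyl f).
  apply: fin_bigcap_measurable => [|j _]; first exact: finite_finset.
  exact: measurable_bin_preimage.
have Pcyl f : P (cyl f) = (\prod_j p (f j))%:E.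
  rewrite /cyl W_indep; last by move=> j; exact: measurable_bin_itv.
  by rewrite -prodEFin; apply: eq_bigr => j _; rewrite PW_bin.
have mA : measurable [set x | t <= \sum_j W j x].
  by apply: measurable_set_ler => //; exact: measurable_sum.
(* each outcome lies in the cylinder of its bins, whose right endpoints dominate it *)
have cover : [set x | t <= \sum_j W j x] `<=`
    \big[setU/set0]_(f : {ffun 'I_n -> 'I_M.+1} | t <= \sum_j z (f j)) cyl f.
  move=> x /= tx.
  have kx j : (bin M (W j x) < M.+1)%N by rewrite ltnS bin_le.
  pose f : {ffun 'I_n -> 'I_M.+1} := [ffun j => Ordinal (kx j)].
  have Wf j : bin_itv M (f j) (W j x).
    by rewrite ffunE; apply: bin_itv_bin => //; case/andP: (W01 j x).
  have tf : t <= \sum_j z (f j).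
    apply: le_trans tx _; apply: ler_sum => j _.
    by have := Wf j; rewrite /bin_itv /= in_itv /= => /andP[].
  by rewrite (bigD1 f) //=; left => j _; exact: Wf.
apply: le_trans (le_measure _ _ _ cover) _; rewrite ?inE //.
  exact: bigsetU_measurable.
apply: le_trans (measure_bigsetU_le _ _ _ mcyl) _.
by rewrite -sumEFin; apply: lee_sum => f _; rewrite -Pcyl.
Qed.

Lemma sum_tail_le_expR (t lam : R) : 0 <= lam <= 1 ->
  (P [set x | (t <= \sum_j W j x)%R] <=
   (expR (lam * (n%:R * (mean + 1 / M%:R) - t) + n%:R * (5/16 * lam ^+ 2)))%:E)%E.
Proof.
move=> lam01; apply: le_trans (sum_tail_le_bins t) _; rewrite lee_fin.
apply: le_trans (chernoff_ffun n t p_ge0 bin_prob_sum z01 lam01) _.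
rewrite ler_expR lerD2r ler_wpM2l ?lerD2r ?ler_wpM2l //; first by case/andP: lam01.
exact: bin_prob_mean_le.
Qed.

End discretization.

Theorem hoeffding_upper_tail (s : R) : (0 < n)%N -> 0 < s ->
  (P [set x | (mean + s <= (\sum_j W j x) / n%:R)%R] <=
   (expR (- (n%:R * s ^+ 2 / 2)))%:E)%E.
Proof.
move=> n_gt0 s_gt0; have n_gt0R : (0 : R) < n%:R by rewrite ltr0n.
have /andP[mean_ge0 _] : 0 <= mean <= 1 := fine_expectation01 P mV V01.
rewrite [X in P X](_ : _ = [set x | n%:R * (mean + s) <= \sum_j W j x]); last first.
  by apply/seteqP; split => x /=; rewrite ler_pdivlMr // mulrC.
have [s_gt1|s_le1] := ltrP 1 s.
  rewrite [X in P X](_ : _ = set0) ?measure0 ?lee_fin ?expR_ge0 //.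
  apply/seteqP; split => // x /=; apply/negP; rewrite -ltNge.
  apply: (@le_lt_trans _ _ (\sum_(j < n) 1)).
    by apply: ler_sum => j _; case/andP: (W01 j x).
  by rewrite sumr_const card_ord; nra.
have [M M_gt0 sM] : exists2 M : nat, (0 < M)%N & 8 / s < M%:R.
  exists (Num.Def.archi_bound (8 / s)).+1 => //.
  apply: lt_le_trans (archi_boundP _) _; first by apply: divr_ge0; rewrite // ltW.
  by rewrite ler_nat.
have M_gt0R : (0 : R) < M%:R by rewrite ltr0n.
have mesh : 1 / M%:R <= s / 8 :> R.
  by rewrite ler_pdivrMr // mulrC mulrA ler_pdivlMr //; rewrite ltr_pdivrMr // in sM; lra.
have mesh_ge0 : 0 <= 1 / M%:R :> R by rewrite div1r invr_ge0 ltW.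
set lam := s - 1 / M%:R.
have lam01 : 0 <= lam <= 1 by apply/andP; split; rewrite /lam; lra.
apply: le_trans (sum_tail_le_expR M_gt0 _ lam01) _; rewrite lee_fin ler_expR.
have -> : lam * (n%:R * (mean + 1 / M%:R) - n%:R * (mean + s)) = - (n%:R * lam ^+ 2).
  by rewrite /lam; ring.
(* [lam >= 7s/8] and [11/16 * (7/8)^2 >= 1/2] *)
have lam_ge : 7 / 8 * s <= lam by rewrite /lam; lra.
have : s ^+ 2 / 2 <= 11 / 16 * lam ^+ 2 by nra.
by nra.
Qed.

End hoeffding.

Lemma measurable_set_cst d (T : measurableType d) (Q : Prop) : measurable [set _ : T | Q].
Proof.
have [q|nq] := pselect Q.
  by rewrite (_ : [set _ | Q] = setT) //; apply/seteqP; split.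
by rewrite (_ : [set _ | Q] = set0) //; apply/seteqP; split.
Qed.

Section nue_output.
Variables (R : realType) (K : nat) (i0 : 'I_K).

Definition nue_step (mh : 'I_K -> R) (st : 'I_K * R) (i : 'I_K) : 'I_K * R :=
  if st.2 < mh i then (i, mh i) else st.

Lemma nue_outputE mh : nue_output i0 mh = (foldl (nue_step mh) (i0, 0) (enum 'I_K)).1.
Proof. by []. Qed.

Lemma foldl_nue_step_inv (mh : 'I_K -> R) (l : seq 'I_K) (st : 'I_K * R) :
  let st' := foldl (nue_step mh) st l in
  [/\ st.2 <= st'.2, (forall i, i \in l -> mh i <= st'.2) & st'.2 = mh st'.1 \/ st' = st].
Proof.
elim: l st => [|a l IH] st /=; first by split => //; right.
have [le_st le_l st'E] := IH (nue_step mh st a).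
have [le_a le_a'] : st.2 <= (nue_step mh st a).2 /\ mh a <= (nue_step mh st a).2.
  rewrite /nue_step; case: ifP => /= lt_st; split => //; first exact: ltW.
  by rewrite leNgt lt_st.
split; first exact: le_trans le_a le_st.
  by move=> i; rewrite inE => /predU1P[->|/le_l//]; exact: le_trans le_a' le_st.
case: st'E => [->|->]; first by left.
by rewrite /nue_step; case: ifP => _; [left | right].
Qed.

(* Without nonnegativity this fails: an arm is stored only if it beats the initial
   best value [0], and the default [i0] is returned when none does. *)
Lemma nue_output_max (mh : 'I_K -> R) : (forall i, 0 <= mh i) ->
  forall i, mh i <= mh (nue_output i0 mh).
Proof.
move=> mh_ge0 i; rewrite nue_outputE.
have [_ /(_ i (mem_enum _ i)) le_i [<- // | st'E]] :=
  foldl_nue_step_inv mh (enum 'I_K) (i0, 0).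
by rewrite st'E in le_i *; exact: le_trans le_i (mh_ge0 i0).
Qed.

Section measurable_nue_output.
Context d (T : measurableType d) (mh : 'I_K -> T -> R).
Hypothesis mmh : forall i, measurable_fun setT (mh i).

Lemma measurable_foldl_nue_step (l : seq 'I_K) (st : T -> 'I_K * R) :
  (forall i, measurable [set t | (st t).1 = i]) ->
  measurable_fun setT (fun t => (st t).2) ->
  (forall i, measurable [set t | (foldl (nue_step (mh^~ t)) (st t) l).1 = i]) /\
  measurable_fun setT (fun t => (foldl (nue_step (mh^~ t)) (st t) l).2).
Proof.
elim: l st => [|a l IH] st mst1 mst2 //=; apply: IH.
  move=> i; have mlt := measurable_set_ltr mst2 (mmh a).
  rewrite (_ : [set t | _] = ([set t | (st t).2 < mh a t] `&` [set _ | a = i]) `|`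
     (~` [set t | (st t).2 < mh a t] `&` [set t | (st t).1 = i])).
    apply: measurableU; apply: measurableI => //; first exact: measurable_set_cst.
    exact: measurableC.
  apply/seteqP; split => t /=; rewrite /nue_step; case: ifP => lt_st /=.
  - by move=> ->; left.
  - by move=> ->; right; split => //; rewrite lt_st.
  - by case => -[] // _ ->.
  - by case => -[].
rewrite /nue_step (_ : (fun t => _) =
    (fun t => if (st t).2 < mh a t then mh a t else (st t).2)).
  by apply: measurable_fun_ifT => //; exact: measurable_fun_ltr.
by apply: funext => t; case: ifP.
Qed.

Lemma measurable_nue_output i : measurable [set t | nue_output i0 (mh^~ t) = i].
Proof.
have [mfold _] := @measurable_foldl_nue_step (enum 'I_K) (fun=> (i0, 0))
  (fun=> measurable_set_cst _ _) (measurable_cst _).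
exact: mfold.
Qed.

Lemma measurable_nue_output_pred (A : pred 'I_K) :
  measurable [set t | A (nue_output i0 (mh^~ t))].
Proof.
rewrite (_ : [set t | _] = \big[setU/set0]_(i | A i) [set t | nue_output i0 (mh^~ t) = i]).
  by apply: bigsetU_measurable => i _; exact: measurable_nue_output.
apply/seteqP; split => [t At|]; first by rewrite (bigD1 (nue_output i0 (mh^~ t))) //=; left.
apply: (big_ind (fun S => S `<=` [set t | A (nue_output i0 (mh^~ t))])) => //.
  by move=> ? ? h1 h2 t [/h1|/h2].
by move=> i Ai t /= ->.
Qed.

End measurable_nue_output.

End nue_output.

Section nue_pulls.
Variables (R : realType) (K : nat) (eps delta : R).
Hypotheses (K_gt0 : (0 < K)%N) (eps_gt0 : 0 < eps) (delta01 : 0 < delta < 1).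

Let ln_Kdelta_gt0 : 0 < ln (K%:R / delta).
Proof.
have /andP[d0 d1] := delta01; have K1 : (1 : R) <= K%:R by rewrite ler1n.
by apply: ln_gt0; rewrite ltr_pdivlMr //; lra.
Qed.

Lemma nue_pulls_ge : 16 / eps ^+ 2 * ln (K%:R / delta) <= (nue_pulls K eps delta)%:R.
Proof.
rewrite /nue_pulls natr_absz ger0_norm ?ceil_ge //.
by rewrite ceil_ge0 // (lt_trans (ltrN10 R)) // mulr_gt0 // divr_gt0 // exprn_gt0.
Qed.

Lemma nue_pulls_gt0 : (0 < nue_pulls K eps delta)%N.
Proof.
rewrite -(ltr_nat R); apply: lt_le_trans nue_pulls_ge.
by rewrite mulr_gt0 // divr_gt0 // exprn_gt0.
Qed.

Lemma nue_pulls_tail_le (c : nat) : (2 <= K)%N -> (1 <= c)%N ->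
  K%:R * expR (- ((nue_pulls K eps delta)%:R * (c%:R * eps / 2) ^+ 2 / 2))
    <= (1 / 2) ^+ (c ^ 2) * delta.
Proof.
move=> K2 c1; have /andP[d0 d1] := delta01.
have K2r : (2 : R) <= K%:R by rewrite (ler_nat R 2 K).
have hN := nue_pulls_ge; set Nr := (nue_pulls K eps delta)%:R in hN *.
set L := ln (K%:R / delta) in hN *.
have Kd : 2 <= K%:R / delta by rewrite ler_pdivlMr //; nra.
have L2 : ln 2 <= L by rewrite /L ler_ln ?posrE //; lra.
have ln2_gt0 : 0 < ln (2 : R) by apply: ln_gt0; lra.
have c1r : (1 : R) <= c%:R by rewrite (ler_nat R 1 c).
set cc := c%:R in c1r *.
(* [N (c eps / 2)^2 / 2 >= 2 c^2 L]: one [L] pays for the union over the [K] arms,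
   the rest gives [2^(-c^2)] *)
have hNL : 2 * cc ^+ 2 * L <= Nr * (cc * eps / 2) ^+ 2 / 2.
  have -> : 2 * cc ^+ 2 * L = (16 / eps ^+ 2 * L) * (cc * eps / 2) ^+ 2 / 2.
    by field; rewrite ?gt_eqF ?exprn_gt0.
  by rewrite ler_wpM2r ?invr_ge0 // ler_wpM2r // sqr_ge0.
apply: (@le_trans _ _ (K%:R * expR (- (2 * cc ^+ 2 * L)))).
  by rewrite ler_wpM2l // ler_expR; lra.
have eL : expR (- L) = delta / K%:R.
  by rewrite expRN /L lnK ?posrE ?invf_div // divr_gt0 //; lra.
have -> : - (2 * cc ^+ 2 * L) = - L + - ((2 * cc ^+ 2 - 1) * L) by ring.
rewrite expRD eL mulrA mulrCA divff ?mulr1; last by apply/eqP; lra.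
rewrite mulrC ler_wpM2r //; first lra.
have -> : (1 / 2 : R) ^+ (c ^ 2) = expR (- ln 2) ^+ (c ^ 2).
  by rewrite expRN lnK ?posrE // div1r.
rewrite -expRM_natl ler_expR natrX -/cc.
have : cc ^+ 2 * ln 2 <= (2 * cc ^+ 2 - 1) * L.
  apply: (@le_trans _ _ (cc ^+ 2 * L)); first by rewrite ler_wpM2l ?sqr_ge0.
  by rewrite ler_wpM2r //; [lra | nra].
lra.
Qed.

End nue_pulls.

Section nue_analysis.
Context d (T : measurableType d) (R : realType) (P : probability T R) (K : nat).
Variable X : 'I_K * nat -> {RV P >-> R}.
Hypothesis X01 : forall ij t, 0 <= X ij t <= 1.
Hypothesis X_indep : mutually_independent P (fun ij => (X ij : T -> R)).
Hypothesis X_ident : forall i j A, measurable A ->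
  distribution P (X (i, j)) A = distribution P (X (i, 0%N)) A.
Variables (N : nat) (N_gt0 : (0 < N)%N).

Let mu := arm_mean X.
Let mh i t := emp_mean N (fun ij => (X ij : T -> R)) i t.
Let tail (s : R) := expR (- (N%:R * s ^+ 2 / 2)).

Lemma emp_mean_tail (g : R -> R) i s : measurable_fun setT g ->
  (forall y, 0 <= y <= 1 -> 0 <= g y <= 1) -> 0 < s ->
  (P [set t | (fine 'E_P[g \o X (i, 0%N)] + s <=
               (\sum_(j < N) g (X (i, val j) t)) / N%:R)%R] <= (tail s)%:E)%E.
Proof.
move=> mg g01 s_gt0.
have mgX ij : measurable_fun setT (g \o X ij) by apply: measurableT_comp.
apply: (@hoeffding_upper_tail _ _ _ P N (g \o X (i, 0%N)) (fun j => g \o X (i, val j))) => //.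
- by move=> t; exact/g01/X01.
- by move=> j t; exact/g01/X01.
- by apply: (mutually_independent_comp X_indep) => // j j' [] /val_inj.
- by move=> j A mA; exact: X_ident (measurable_preimageT mg mA).
Qed.

Lemma emp_mean_upper_tail i s : 0 < s ->
  (P [set t | (mu i + s <= mh i t)%R] <= (tail s)%:E)%E.
Proof.
by move=> s_gt0; exact: (@emp_mean_tail idfun i s (@measurable_id _ _ setT)).
Qed.

Lemma emp_mean_lower_tail i s : 0 < s ->
  (P [set t | (mh i t <= mu i - s)%R] <= (tail s)%:E)%E.
Proof.
move=> s_gt0; have mX : measurable_fun setT (X (i, 0%N)) by [].
have := @emp_mean_tail (fun y => 1 - y) i s _ _ s_gt0.
rewrite [fine _](@fine_expectation_onem _ _ _ P _ mX (X01 _)).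
have N_neq0 : N%:R != 0 :> R by rewrite pnatr_eq0 -lt0n.
have -> : [set t | (mh i t <= mu i - s)%R] =
    [set t | (1 - mu i + s <= (\sum_(j < N) (1 - X (i, val j) t)) / N%:R)%R].
  apply/seteqP; split => t /=;
    rewrite sumrB sumr_const card_ord mulrBl divff // /mh /emp_mean; lra.
apply.
- by apply: measurable_funB => //; exact: measurable_cst.
- by move=> y; lra.
Qed.

Lemma nue_output_near_best (i0 : 'I_K) (s : R) : 0 < s ->
  ((1 - K%:R * tail (s / 2))%:E <=
   P [set t | (best_mean i0 mu - s <= mu (nue_output i0 (mh^~ t)))%R])%E.
Proof.
move=> s_gt0; set out := fun t => nue_output i0 (mh^~ t).
have mmh i : measurable_fun setT (mh i).
  apply: measurable_funM; last exact: measurable_cst.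
  by apply: measurable_sum => j.
have mh_ge0 i t : 0 <= mh i t.
  by apply: divr_ge0 => //; apply: sumr_ge0 => j _; case/andP: (X01 (i, val j) t).
pose b := [arg max_(i > i0) mu i]%O.
have mu_le_b i : mu i <= mu b by rewrite /b; case: arg_maxP => //= j _; apply.
have best_le : best_mean i0 mu <= mu b by apply: bigmax_le => // i _.
pose F i := if i == b then [set t | (mh b t <= mu b - s / 2)%R]
            else [set t | (mu i + s / 2 <= mh i t)%R].
have mF i : measurable (F i).
  by rewrite /F; case: ifP => _; apply: measurable_set_ler.
have PF i : (P (F i) <= (tail (s / 2))%:E)%E.
  have s2_gt0 : 0 < s / 2 by rewrite divr_gt0.
  by rewrite /F; case: ifP => _; [exact: emp_mean_lower_tail | exact: emp_mean_upper_tail].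
set bad := \big[setU/set0]_(i < K) F i.
have mbad : measurable bad by exact: bigsetU_measurable.
have Pbad : (P bad <= (K%:R * tail (s / 2))%:E)%E.
  apply: le_trans (measure_bigsetU_le _ _ _ mF) _.
  apply: le_trans (@lee_sum _ _ _ (fun=> (tail (s / 2))%:E) _ _ (fun i _ => PF i)) _.
  by rewrite sumEFin sumr_const card_ord mulr_natl.
set good := [set t | _].
(* off [bad], the output's empirical mean is within [s/2] of its mean and
   dominates the one of [b], which is within [s/2] of [mu b] *)
have bad_good : ~` bad `<=` good.
  move=> t /= not_bad; change (best_mean i0 mu - s <= mu (out t)).
  have nF i : ~ F i t by move=> Fi; apply: not_bad; rewrite /bad (bigD1 i) //; left.
  have mh_b := nue_output_max i0 (mh_ge0^~ t) b.
  have := nF b; rewrite /F eqxx /= => /negP; rewrite -ltNge => mh_b_gt.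
  case: (eqVneq (out t) b) => [->|ob]; first by lra.
  have := nF (out t); rewrite /F (negbTE ob) /= => /negP; rewrite -ltNge.
  by lra.
have mgood : measurable good.
  exact: measurable_nue_output_pred mmh (fun i => best_mean i0 mu - s <= mu i).
apply: (@le_trans _ _ (P (~` bad))).
  rewrite probability_setC // -(fineK (fin_num_measure P _ mbad)) -EFinB lee_fin lerB //.
  by rewrite -lee_fin fineK // fin_num_measure.
by apply: le_measure; rewrite ?inE //; exact: measurableC.
Qed.

End nue_analysis.

Theorem lemma5p2 (d : measure_display) (T : measurableType d) (R : realType)
  (P : probability T R) (K : nat) (hK : (0 < K)%N)
  (X : 'I_K * nat -> {RV P >-> R}) (eps delta : R) (c : nat) :
  0 < eps < 1 -> 0 < delta < 1 -> (1 <= c)%N ->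
  (* rewards supported on [0,1] *)
  (forall ij t, 0 <= X ij t <= 1) ->
  (* all pulls are mutually independent *)
  mutually_independent P (fun ij => (X ij : T -> R)) ->
  (* pulls of the same arm are identically distributed *)
  (forall i j A, measurable A ->
     distribution P (X (i, j)) A = distribution P (X (i, 0%N)) A) ->
  let i0 := Ordinal hK in
  let N := nue_pulls K eps delta in
  let mu := arm_mean X in
  let out := fun t => nue_output i0 (fun i => emp_mean N (fun ij => (X ij : T -> R)) i t) in
  (P [set t | (best_mean i0 mu - c%:R * eps <= mu (out t))%R]
     >= (1 - (1 / 2) ^+ (c ^ 2) * delta)%:E)%E.
Proof.
move=> /andP[eps_gt0 _] delta01 c_ge1 X01 X_indep X_ident; cbv zeta.
set i0 := Ordinal hK; set N := nue_pulls K eps delta.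
have err_ge0 : 0 <= (1 / 2) ^+ (c ^ 2) * delta :> R.
  by case/andP: delta01 => d0 _; rewrite mulr_ge0 ?exprn_ge0 ?ltW.
have [K_le1|K_ge2] := leqP K 1.
  rewrite [X in P X](_ : _ = setT) ?probability_setT ?lee_fin ?gerBl //.
  apply/seteqP; split => // t _ /=; set o := nue_output _ _.
  suff : best_mean i0 (arm_mean X) <= arm_mean X o.
    by have := mulr_ge0 (ler0n R c) (ltW eps_gt0); lra.
  have val0 (i : 'I_K) : val i = 0%N.
    by apply/eqP; rewrite -leqn0 -ltnS (leq_trans (ltn_ord i) K_le1).
  have all_o (i : 'I_K) : i = o by apply: val_inj; rewrite !val0.
  by apply: bigmax_le => [|i _]; [rewrite (all_o i0) | rewrite (all_o i)].
have N_gt0 : (0 < N)%N by exact: nue_pulls_gt0.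
have c_gt0 : (0 : R) < c%:R by rewrite ltr0n.
apply: le_trans (nue_output_near_best X01 X_indep X_ident N_gt0 i0 (mulr_gt0 c_gt0 eps_gt0)).
by rewrite lee_fin lerB //= nue_pulls_tail_le.
Qed.
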